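(* In a synchronized communication system (possibly after some robots have left), a ring of length $2k\pi$ contains at most $k$ robots. Moreover, if no robot has left the system, a ring of length $2k\pi$ contains exactly $k$ robots.
   Context: Model. A system consists of pairwise disjoint unit circles $C_1,\dots,C_n$ in the plane (trajectories) and a communication range $r>0$. Its communication graph $G$ has vertex set $\{C_1,\dots,C_n\}$, $C_i,C_j$ adjacent iff the distance between their centres is at most $2+r$. Positions on a circle are angles (mod $2\pi$). For an edge $(i,j)$, the link position $\phi_{ij}$ is the angle of the point of $C_i$ closest to $C_j$. A schedule $F=(f,g)$ assigns each circle a starting angle $f(C_i)$ and direction $g(C_i)\in\{1,-1\}$; a robot following it on $C_i$ is at $f(C_i)+g(C_i)2\pi t$ at time $t$. $F$ is a synchronization schedule if $g(C_i)=-g(C_j)$ for adjacent circles and robots following $F$ on adjacent $C_i,C_j$ are at $\phi_{ij},\phi_{ji}$ at exactly the same times. A synchronized communication system (SCS) consists of $n$ robots, initially one per circle, following a synchronization schedule, with the switching rule: when a robot on $C_i$ reaches $\phi_{ij}$ and $C_j$ is empty, it instantly passes to $C_j$ (instantaneously) and follows the schedule of $C_j$; if $C_j$ has a robot, they meet and each stays on its circle. Robots may leave the system (possibly at different times); the remaining ones never leave. Rings. Trace a point moving along a circle $C_i$ in direction $g(C_i)$; whenever it reaches a link position $\phi_{ij}$ of its current circle, it passes to $C_j$ at $\phi_{ji}$ and continues in direction $g(C_j)$. The closed curve traced is a ring; the circles decompose into rings overlapping only at link positions. The length of a ring is the total length of the circle arcs forming it (it is a multiple of $2\pi$). A robot is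 in a ring if it lies on a point of that ring. *)

From mathcomp Require Import all_boot.
From mathcomp Require Import boolp.
From Stdlib Require Import Reals.

Set Implicit Arguments.
Unset Strict Implicit.
Unset Printing Implicit Defensive.
Local Open Scope R_scope.

(* A system of n unit circles C_i with centres (cx i, cy i). *)

Definition cdist (n : nat) (cx cy : 'I_n -> R) (i j : 'I_n) : R :=
  sqrt ((cx j - cx i) * (cx j - cx i) + (cy j - cy i) * (cy j - cy i))%R.

Definition disjoint_circles (n : nat) (cx cy : 'I_n -> R) : Prop :=
  forall i j : 'I_n, i <> j -> (2 < cdist cx cy i j)%R.

(* edges of the communication graph with range r *)
Definition adjacent (n : nat) (cx cy : 'I_n -> R) (r : R) (i j : 'I_n) : Prop :=
  i <> j /\ (cdist cx cy i j <= 2 + r)%R.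

Definition point (n : nat) (cx cy : 'I_n -> R) (i : 'I_n) (a : R) : R * R :=
  (cx i + cos a, cy i + sin a)%R.

(* angle a is the link position phi_ij, i.e. the point of C_i at angle a is
   the point of C_i closest to C_j (direction of the centre of C_j). *)
Definition at_link (n : nat) (cx cy : 'I_n -> R) (i j : 'I_n) (a : R) : Prop :=
  (cos a * cdist cx cy i j = cx j - cx i)%R /\
  (sin a * cdist cx cy i j = cy j - cy i)%R.

(* directions g(C_i) in {1,-1}: true = 1, false = -1 *)
Definition gsign (b : bool) : R := if b then 1%R else (-1)%R.

Definition sched (n : nat) (f : 'I_n -> R) (g : 'I_n -> bool) (i : 'I_n) (t : R) : R :=
  (f i + gsign (g i) * 2 * PI * t)%R.

Definition sync_schedule (n : nat) (cx cy : 'I_n -> R) (r : R)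
    (f : 'I_n -> R) (g : 'I_n -> bool) : Prop :=
  forall i j : 'I_n, adjacent cx cy r i j ->
    g i = ~~ g j /\
    (forall t : R, at_link cx cy i j (sched f g i t) <-> at_link cx cy j i (sched f g j t)).

(* robot q (the robot initially on C_q) is still in the system at time t;
   leave q = Some T : it leaves at time T; None : it never leaves *)
Definition present (n : nat) (leave : 'I_n -> option R) (q : 'I_n) (t : R) : Prop :=
  match leave q with None => True | Some T => (t < T)%R end.

Definition left_lim (n : nat) (p : R -> 'I_n) (t : R) (i : 'I_n) : Prop :=
  exists eps : R, (0 < eps)%R /\ forall s : R, (t - eps < s < t)%R -> p s = i.

Definition right_const (n : nat) (p : R -> 'I_n) (t : R) : Prop :=
  exists eps : R, (0 < eps)%R /\ forall s : R, (t <= s < t + eps)%R -> p s = p t.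

Definition circle_empty (n : nat) (leave : 'I_n -> option R) (pos : 'I_n -> R -> 'I_n)
    (q j : 'I_n) (t : R) : Prop :=
  forall q' : 'I_n, q' <> q -> present leave q' t -> ~ left_lim (pos q') t j.

(* pos q t = circle carrying robot q at time t (positions are right-continuous:
   at a switching instant the robot is already on the new circle).  The robot on
   C_p at time t is at angle sched f g p t. *)
Definition scs_run (n : nat) (cx cy : 'I_n -> R) (r : R) (f : 'I_n -> R)
    (g : 'I_n -> bool) (leave : 'I_n -> option R) (pos : 'I_n -> R -> 'I_n) : Prop :=
  (forall q : 'I_n, pos q 0%R = q) /\
  (forall (q : 'I_n) (t : R), (0 <= t)%R -> present leave q t -> right_const (pos q) t) /\
  (forall (q : 'I_n) (t : R), (0 < t)%R -> present leave q t ->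
     exists i : 'I_n, left_lim (pos q) t i /\
       ((exists j : 'I_n, adjacent cx cy r i j /\ at_link cx cy i j (sched f g i t) /\
            circle_empty leave pos q j t /\ pos q t = j) \/
        ((forall j : 'I_n, adjacent cx cy r i j -> at_link cx cy i j (sched f g i t) ->
            ~ circle_empty leave pos q j t) /\ pos q t = i))).

(* Tracing a ring from the point of C_i0 at angle sched f g i0 tau0 (every point
   of every circle has this form): c s is the circle of the traced point after
   tracing time s; the traced point moves like a schedule robot, so its angle at
   tracing time s is sched f g (c s) (tau0 + s); it always switches at link
   positions (right-continuous convention). *)
Definition trace_path (n : nat) (cx cy : 'I_n -> R) (r : R) (f : 'I_n -> R)
    (g : 'I_n -> bool) (i0 : 'I_n) (tau0 : R) (c : R -> 'I_n) : Prop :=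
  c 0%R = i0 /\
  (forall s : R, (0 <= s)%R -> right_const c s) /\
  (forall s : R, (0 < s)%R ->
     exists i : 'I_n, left_lim c s i /\
       ((exists j : 'I_n, adjacent cx cy r i j /\ at_link cx cy i j (sched f g i (tau0 + s)) /\
            c s = j) \/
        ((forall j : 'I_n, adjacent cx cy r i j -> ~ at_link cx cy i j (sched f g i (tau0 + s))) /\
            c s = i))).

Definition trace_point (n : nat) (cx cy : 'I_n -> R) (f : 'I_n -> R) (g : 'I_n -> bool)
    (tau0 : R) (c : R -> 'I_n) (s : R) : R * R :=
  point cx cy (c s) (sched f g (c s) (tau0 + s)%R).

(* the traced ring has length 2 k pi: the traced curve (speed 2 pi) first closes up
   after tracing time k *)
Definition ring_length_is (n : nat) (cx cy : 'I_n -> R) (f : 'I_n -> R) (g : 'I_n -> bool)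
    (tau0 : R) (c : R -> 'I_n) (k : nat) : Prop :=
  (0 < k)%nat /\
  trace_point cx cy f g tau0 c (INR k) = trace_point cx cy f g tau0 c 0%R /\
  (forall s : R, (0 < s < INR k)%R ->
     trace_point cx cy f g tau0 c s <> trace_point cx cy f g tau0 c 0%R).

Definition robot_in_ring (n : nat) (cx cy : 'I_n -> R) (f : 'I_n -> R) (g : 'I_n -> bool)
    (leave : 'I_n -> option R) (pos : 'I_n -> R -> 'I_n)
    (tau0 : R) (c : R -> 'I_n) (q : 'I_n) (t : R) : Prop :=
  present leave q t /\
  exists s : R, (0 <= s)%R /\
    trace_point cx cy f g tau0 c s = point cx cy (pos q t) (sched f g (pos q t) t).

From mathcomp Require Import all_boot.
From mathcomp Require Import boolp.
From Stdlib Require Import Reals Lra Lia Psatz Classical.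

(* Every robot and every traced point moves at the same angular speed as the
   schedule, so after an integer time it is back at the same angle of the same
   circle.  Hence a ring of length 2 k pi, traced from phase t, meets exactly k
   circles at a point where a schedule robot is located at time t: the circles
   c (s0), c (s0 + 1), ..., c (s0 + k - 1), which are distinct because the ring
   does not close up before time k.  Two robots present at the same time are on
   different circles, since a robot only passes to an empty circle and two
   neighbours of a circle never share its link position; so a ring meets at most
   k robots, and exactly k when all n robots are present, one per circle. *)

Local Open Scope R_scope.

Lemma cos_sin_period_Z (y : R) (z : Z) :
  cos (y + 2 * PI * IZR z) = cos y /\ sin (y + 2 * PI * IZR z) = sin y.
Proof.
have [z_ge0|z_lt0] := Z.le_gt_cases 0 z.
- rewrite -(Znat.Z2Nat.id z z_ge0) -INR_IZR_INZ.
  have -> : y + 2 * PI * INR (Z.to_nat z) = y + 2 * INR (Z.to_nat z) * PI by ring.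
  by rewrite cos_period sin_period.
- have -> : z = (- Z.of_nat (Z.to_nat (- z)))%Z by lia.
  rewrite opp_IZR -INR_IZR_INZ.
  set N := Z.to_nat (- z).
  rewrite -(cos_period _ N) -(sin_period _ N).
  by have -> : y + 2 * PI * - INR N + 2 * INR N * PI = y by ring.
Qed.

Lemma cos_sin_inj_mod {a b : R} :
  cos a = cos b -> sin a = sin b -> exists m : Z, a = b + 2 * PI * IZR m.
Proof.
move=> cos_ab sin_ab.
have sin0 : sin (a - b) = 0 by rewrite sin_minus cos_ab sin_ab; ring.
have cos1 : cos (a - b) = 1 by rewrite cos_minus cos_ab sin_ab Rplus_comm sin2_cos2.
have [k Hk] := sin_eq_0_0 _ sin0.
have [[m km]|[m km]] := Z.Even_or_Odd k; subst k.
- by exists m; rewrite mult_IZR in Hk; lra.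
- rewrite plus_IZR mult_IZR in Hk.
  have : cos (PI + 2 * PI * IZR m) = 1.
    by rewrite -cos1 Hk; congr cos; ring.
  by rewrite (proj1 (cos_sin_period_Z _ _)) cos_PI; lra.
Qed.

Lemma Rnonneg_continuity_ind (P : R -> Prop) :
  P 0 ->
  (forall tau, 0 < tau -> (forall u, 0 <= u < tau -> P u) -> P tau) ->
  (forall tau, 0 <= tau -> P tau -> exists e, 0 < e /\ forall u, tau <= u < tau + e -> P u) ->
  forall t, 0 <= t -> P t.
Proof.
move=> P0 Pleft Pright t t_ge0.
apply: NNPP => notPt.
pose E s := 0 <= s /\ forall u, 0 <= u <= s -> P u.
have E_bounded : bound E.
  exists t => s [_ Ps]; apply: Rnot_lt_le => lt_ts.
  by apply: notPt; apply: Ps; lra.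
have E0 : E 0 by split=> [|u u0]; [lra | have -> : u = 0 by lra].
have [tau [tau_ub tau_lub]] := completeness E E_bounded (ex_intro _ 0 E0).
have tau_ge0 : 0 <= tau by apply: tau_ub.
have P_before : forall u, 0 <= u < tau -> P u.
  move=> u u_tau; apply: NNPP => notPu.
  suff : tau <= u by lra.
  apply: tau_lub => s [_ Ps]; apply: Rnot_lt_le => lt_us.
  by apply: notPu; apply: Ps; lra.
have Ptau : P tau.
  by case: (Rle_lt_or_eq_dec 0 tau tau_ge0) => [/Pleft|<-]; auto.
have [e [e_gt0 Pe]] := Pright tau tau_ge0 Ptau.
suff : E (tau + e / 2) by move/tau_ub; lra.
split=> [|u u_le]; first lra.
by case: (Rlt_le_dec u tau) => ?; [apply: P_before | apply: Pe]; lra.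
Qed.

Lemma exists_unit_rep (x : R) : exists s0 (z : Z), 0 <= s0 < 1 /\ s0 = x + IZR z.
Proof.
have [up_gt up_le] := archimed x.
by exists (x + IZR (1 - up x)), (1 - up x)%Z; rewrite minus_IZR; split=> //; lra.
Qed.

Lemma left_windows_meet {tau e1 e2 : R} : 0 < tau -> 0 < e1 -> 0 < e2 ->
  exists u, 0 <= u < tau /\ tau - e1 < u /\ tau - e2 < u.
Proof.
move=> tau_gt0 e1_gt0 e2_gt0.
have := Rmin_l e1 e2; have := Rmin_r e1 e2; have := Rmin_pos e1 e2 e1_gt0 e2_gt0.
set e := Rmin e1 e2 => e_gt0 e_le2 e_le1.
exists (Rmax (tau / 2) (tau - e / 2)).
have := Rmax_l (tau / 2) (tau - e / 2); have := Rmax_r (tau / 2) (tau - e / 2).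
have : Rmax (tau / 2) (tau - e / 2) < tau by apply: Rmax_lub_lt; lra.
lra.
Qed.

Lemma left_lim_unique {n : nat} {p : R -> 'I_n} {t : R} {i j : 'I_n} :
  0 < t -> left_lim p t i -> left_lim p t j -> i = j.
Proof.
move=> t_gt0 [e1 [e1_gt0 lim_i]] [e2 [e2_gt0 lim_j]].
have [u [u_lt [u1 u2]]] := left_windows_meet t_gt0 e1_gt0 e2_gt0.
by rewrite -(lim_i u) ?(lim_j u) //; lra.
Qed.

Lemma right_const_window {n : nat} {p1 p2 : R -> 'I_n} {t1 t2 : R} :
  right_const p1 t1 -> right_const p2 t2 ->
  exists e, 0 < e /\ forall u, 0 <= u < e -> p1 (t1 + u) = p1 t1 /\ p2 (t2 + u) = p2 t2.
Proof.
move=> [e1 [e1_gt0 p1_const]] [e2 [e2_gt0 p2_const]].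
exists (Rmin e1 e2); split; first exact: Rmin_pos.
move=> u u_lt; have := Rmin_l e1 e2; have := Rmin_r e1 e2 => ? ?.
by split; [apply: p1_const | apply: p2_const]; lra.
Qed.

Lemma present_le {n : nat} {leave : 'I_n -> option R} {q : 'I_n} {u : R} (v : R) :
  present leave q u -> v <= u -> present leave q v.
Proof. by rewrite /present; case: (leave q) => // T; lra. Qed.

Definition ring_circles {n : nat} (c : R -> 'I_n) (x : R) : {set 'I_n} :=
  [set j | `[< exists s, 0 <= s /\ c s = j /\ exists m : Z, s = x + IZR m >]].

Section SynchronizedSystem.

Context {n : nat} {cx cy : 'I_n -> R} {r : R} {f : 'I_n -> R} {g : 'I_n -> bool}.
Hypothesis disjoint : disjoint_circles cx cy.
Hypothesis sync : sync_schedule cx cy r f g.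

Lemma sched_addZ (i : 'I_n) (x : R) (m : Z) :
  sched f g i (x + IZR m) = sched f g i x + 2 * PI * IZR (if g i then m else (- m)%Z).
Proof. by rewrite /sched /gsign; case: (g i); rewrite ?opp_IZR; ring. Qed.

Lemma at_link_period (i j : 'I_n) (a : R) (z : Z) :
  at_link cx cy i j (a + 2 * PI * IZR z) <-> at_link cx cy i j a.
Proof. by rewrite /at_link !(proj1 (cos_sin_period_Z _ _)) !(proj2 (cos_sin_period_Z _ _)). Qed.

Lemma point_period (i : 'I_n) (a : R) (z : Z) :
  point cx cy i (a + 2 * PI * IZR z) = point cx cy i a.
Proof. by rewrite /point (proj1 (cos_sin_period_Z _ _)) (proj2 (cos_sin_period_Z _ _)). Qed.

Lemma cdist_sym (i j : 'I_n) : cdist cx cy i j = cdist cx cy j i.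
Proof. by rewrite /cdist; congr sqrt; ring. Qed.

Lemma adjacent_sym {i j : 'I_n} : adjacent cx cy r i j -> adjacent cx cy r j i.
Proof. by move=> [ij dij]; split; [auto | rewrite cdist_sym]. Qed.

(* Two points of unit circles are at distance at most 2, while distinct circles
   have centres more than 2 apart. *)
Lemma point_inj {i j : 'I_n} {a b : R} :
  point cx cy i a = point cx cy j b -> i = j /\ cos a = cos b /\ sin a = sin b.
Proof.
move=> [eqx eqy].
case: (classic (i = j)) => ij; first by subst j; split=> //; split; lra.
have := disjoint _ _ ij; rewrite /cdist.
have -> : cx j - cx i = cos a - cos b by lra.
have -> : cy j - cy i = sin a - sin b by lra.
have := sin2_cos2 a; have := sin2_cos2 b; rewrite /Rsqr => sa sb.
have : (cos a - cos b) * (cos a - cos b) + (sin a - sin b) * (sin a - sin b) <= Rsqr 2.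
  by have := pow2_ge_0 (cos a + cos b); have := pow2_ge_0 (sin a + sin b); rewrite /Rsqr; nra.
by move/sqrt_le_1_alt; rewrite sqrt_Rsqr; lra.
Qed.

(* Two neighbours of C_j seen in the same direction from its centre lie on a ray,
   so they are within distance r of each other; both would then carry the
   direction opposite to C_j while being adjacent. *)
Lemma at_link_inj {j i i' : 'I_n} {a : R} :
  adjacent cx cy r j i -> adjacent cx cy r j i' ->
  at_link cx cy j i a -> at_link cx cy j i' a -> i = i'.
Proof.
move=> adj_ji adj_ji' [cos_i sin_i] [cos_i' sin_i'].
apply: NNPP => ii'.
have [gj _] := sync _ _ adj_ji; have [gj' _] := sync _ _ adj_ji'.
suff /(sync _ _) [] : adjacent cx cy r i i'.
  by move: gj gj'; case: (g j); case: (g i); case: (g i').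
split=> //.
move: adj_ji adj_ji' => [ji d1_le] [ji' d2_le].
move: (disjoint _ _ ji) (disjoint _ _ ji') d1_le d2_le cos_i sin_i cos_i' sin_i'.
set d1 := cdist cx cy j i; set d2 := cdist cx cy j i' => d1_gt d2_gt d1_le d2_le c1 s1 c2 s2.
rewrite /cdist.
have -> : cx i' - cx i = cos a * (d2 - d1) by lra.
have -> : cy i' - cy i = sin a * (d2 - d1) by lra.
have -> : cos a * (d2 - d1) * (cos a * (d2 - d1)) + sin a * (d2 - d1) * (sin a * (d2 - d1))
    = Rsqr (d2 - d1).
  by rewrite /Rsqr -[X in _ = X]Rmult_1_l -(sin2_cos2 a) /Rsqr; ring.
by rewrite sqrt_Rsqr_abs; apply: Rabs_le; lra.
Qed.

Section Run.

Context {leave : 'I_n -> option R} {pos : 'I_n -> R -> 'I_n}.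
Hypothesis run : scs_run cx cy r f g leave pos.

Lemma run_switch_distinct {q q' i i' : 'I_n} {tau : R} :
  0 < tau -> q <> q' -> i <> i' ->
  present leave q tau -> present leave q' tau ->
  left_lim (pos q) tau i -> left_lim (pos q') tau i' ->
  pos q tau <> pos q' tau.
Proof.
move: run => [_ [_ run_left]] tau_gt0 qq' ii' pq pq' lim_q lim_q'.
have [i1 [lim1 step_q]] := run_left q tau tau_gt0 pq.
have [i1' [lim1' step_q']] := run_left q' tau tau_gt0 pq'.
have ? := left_lim_unique tau_gt0 lim1 lim_q; have ? := left_lim_unique tau_gt0 lim1' lim_q'.
subst i1 i1'.
move: step_q step_q' => [[j [adj_ij [link_ij [empty_j ->]]]]|[_ ->]]
                       [[j' [adj_ij' [link_ij' [empty_j' ->]]]]|[_ ->]].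
- move=> jj'; rewrite -jj' in adj_ij' link_ij'.
  apply: ii'; apply: (at_link_inj (adjacent_sym adj_ij) (adjacent_sym adj_ij')).
  + exact: (proj1 (proj2 (sync _ _ adj_ij) tau)).
  + exact: (proj1 (proj2 (sync _ _ adj_ij') tau)).
- move=> ji'; apply: (empty_j q') pq' _; first by move/esym.
  by rewrite ji'.
- by move=> ij'; apply: (empty_j' q qq' pq); rewrite -ij'.
- exact: ii'.
Qed.

Lemma run_pos_inj {q q' : 'I_n} {t : R} :
  q <> q' -> 0 <= t -> present leave q t -> present leave q' t -> pos q t <> pos q' t.
Proof.
move: run => [pos0 [run_right run_left]] qq' t_ge0.
pose P u := present leave q u -> present leave q' u -> pos q u <> pos q' u.
apply: (Rnonneg_continuity_ind P) t t_ge0 => [|tau tau_gt0 IH pq pq'|tau tau_ge0 Ptau].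
- by rewrite /P !pos0.
- have [i [lim_q _]] := run_left q tau tau_gt0 pq.
  have [i' [lim_q' _]] := run_left q' tau tau_gt0 pq'.
  apply: (run_switch_distinct tau_gt0 qq' _ pq pq' lim_q lim_q') => ii'.
  move: lim_q lim_q' => [e1 [e1_gt0 L1]] [e2 [e2_gt0 L2]].
  have [u [u_lt [u1 u2]]] := left_windows_meet tau_gt0 e1_gt0 e2_gt0.
  apply: (IH u u_lt); [apply: (present_le _ pq) | apply: (present_le _ pq') |]; try lra.
  by rewrite L1 ?L2 ?ii' //; lra.
- case: (classic (present leave q tau /\ present leave q' tau)) => [[pq pq']|not_present].
  + have [e [e_gt0 const]] := right_const_window (run_right q tau tau_ge0 pq)
                                                (run_right q' tau tau_ge0 pq').
    exists e; split=> // u u_le _ _.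
    have [] := const (u - tau) ltac:(lra); rewrite !Rplus_minus => -> ->.
    exact: Ptau.
  + exists 1; split=> [|u u_le pq pq']; first lra.
    by case: not_present; split; [apply: (present_le _ pq) | apply: (present_le _ pq')]; lra.
Qed.

End Run.

Section Trace.

Context {i0 : 'I_n} {tau0 : R} {c : R -> 'I_n}.
Hypothesis trace : trace_path cx cy r f g i0 tau0 c.

(* The traced point moves like a schedule robot, so two tracing times with the
   same circle and the same phase modulo 1 continue identically. *)
Lemma trace_shift (a b : R) (m : Z) :
  0 <= a -> 0 <= b -> b = a + IZR m -> c a = c b ->
  forall u, 0 <= u -> c (a + u) = c (b + u).
Proof.
move: trace => [_ [trace_right trace_left]] a_ge0 b_ge0 b_def cab.
apply: Rnonneg_continuity_ind => [|tau tau_gt0 IH|tau tau_ge0 c_tau].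
- by rewrite !Rplus_0_r.
- have [i [lim_a step_a]] := trace_left (a + tau) ltac:(lra).
  have [i' [lim_b step_b]] := trace_left (b + tau) ltac:(lra).
  have ? : i' = i.
    move: lim_a lim_b => [e1 [e1_gt0 L1]] [e2 [e2_gt0 L2]].
    have [u [u_lt [u1 u2]]] := left_windows_meet tau_gt0 e1_gt0 e2_gt0.
    by rewrite -(L1 (a + u)) -?(L2 (b + u)) ?IH //; lra.
  subst i'.
  have same_links j : at_link cx cy i j (sched f g i (tau0 + (b + tau))) <->
                      at_link cx cy i j (sched f g i (tau0 + (a + tau))).
    have -> : tau0 + (b + tau) = tau0 + (a + tau) + IZR m by rewrite b_def; ring.
    by rewrite sched_addZ at_link_period.
  move: step_a step_b => [[j [adj_ij [link_ij ->]]]|[no_link ->]]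
                        [[j' [adj_ij' [link_ij' ->]]]|[no_link' ->]] //.
  + by apply: (at_link_inj adj_ij adj_ij' link_ij); apply/same_links.
  + by case: (no_link' j adj_ij); apply/same_links.
  + by case: (no_link j' adj_ij'); apply/same_links.
- have [e [e_gt0 const]] := right_const_window (trace_right (a + tau) ltac:(lra))
                                              (trace_right (b + tau) ltac:(lra)).
  exists e; split=> // u u_le.
  have shift x : x + tau + (u - tau) = x + u by ring.
  by have [] := const (u - tau) ltac:(lra); rewrite !shift => -> ->.
Qed.

Lemma trace_pointE (s t : R) (j : 'I_n) :
  trace_point cx cy f g tau0 c s = point cx cy j (sched f g j t) <->
  c s = j /\ exists m : Z, s = t - tau0 + IZR m.
Proof.
rewrite /trace_point; split=> [same|[-> [m ->]]].
- have [cs_j [cos_eq sin_eq]] := point_inj same.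
  split=> //; rewrite cs_j /sched /gsign in cos_eq sin_eq.
  have [m angle] := cos_sin_inj_mod cos_eq sin_eq.
  have := PI_RGT_0; case: (g j) angle => angle PI_gt0.
  + by exists m; apply: (Rmult_eq_reg_l (2 * PI)); nra.
  + by exists (- m)%Z; rewrite opp_IZR; apply: (Rmult_eq_reg_l (2 * PI)); nra.
- have -> : tau0 + (t - tau0 + IZR m) = t + IZR m by ring.
  by rewrite sched_addZ point_period.
Qed.

Lemma robot_in_ringE (leave : 'I_n -> option R) (pos : 'I_n -> R -> 'I_n) (q : 'I_n) (t : R) :
  robot_in_ring cx cy f g leave pos tau0 c q t <->
  present leave q t /\ pos q t \in ring_circles c (t - tau0).
Proof.
rewrite inE; split=> [[pq [s [s_ge0 /trace_pointE [cs m]]]]|[pq /asboolP [s [s_ge0 [cs m]]]]].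
- by split=> //; apply/asboolP; exists s.
- by split=> //; exists s; split=> //; apply/trace_pointE.
Qed.

Section Ring.

Context {k : nat}.
Hypothesis ring : ring_length_is cx cy f g tau0 c k.

Lemma trace_closes : c (INR k) = c 0.
Proof. by move: ring => [_ [close _]]; case: (point_inj close). Qed.

Lemma trace_periodic (M : nat) (u : R) : 0 <= u -> c (INR M * INR k + u) = c u.
Proof.
elim: M u => [|M IH] u u_ge0; first by rewrite Rmult_0_l Rplus_0_l.
have -> : INR M.+1 * INR k + u = INR M * INR k + (INR k + u) by rewrite S_INR; ring.
rewrite IH; last by have := pos_INR k; lra.
have shift := trace_shift 0 (INR k) (Z.of_nat k) (Rle_refl 0) (pos_INR k).
rewrite -INR_IZR_INZ Rplus_0_l trace_closes in shift.
by rewrite -(shift erefl erefl u u_ge0) Rplus_0_l.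
Qed.

Lemma trace_no_early_return (s : R) (p : nat) :
  0 <= s <= INR k -> (0 < p)%nat -> (p < k)%nat -> c (s + INR p) <> c s.
Proof.
move=> s_bounds p_gt0 p_lt same.
move: ring => [_ [_ first_return]].
have p_bounds : 0 < INR p < INR k by split; [apply: (lt_INR 0) | apply: lt_INR]; apply/ltP.
have := trace_shift s (s + INR p) (Z.of_nat p) ltac:(lra) ltac:(lra)
  ltac:(by rewrite -INR_IZR_INZ) (esym same) (INR k - s) ltac:(lra) => shift.
have c_p : c (INR p) = c 0.
  have e1 : s + (INR k - s) = INR k by ring.
  have e2 : s + INR p + (INR k - s) = INR 1 * INR k + INR p by rewrite /=; ring.
  rewrite e1 e2 in shift.
  by rewrite -trace_closes -(trace_periodic 1 _ (pos_INR p)).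
apply: (first_return (INR p) p_bounds); apply/trace_pointE.
by split=> //; exists (Z.of_nat p); rewrite -INR_IZR_INZ; ring.
Qed.

Lemma card_ring_circles (x : R) : #|ring_circles c x| = k.
Proof.
have [s0 [z [s0_bounds s0_def]]] := exists_unit_rep x.
have k_gt0 : (0 < k)%nat by case: ring.
pose F (m : 'I_k) := c (s0 + INR m).
have F_inj : injective F.
  suff F_lt (a b : 'I_k) : (a < b)%nat -> F a <> F b.
    move=> a b Fab; apply: ord_inj.
    by case: (ltngtP a b) => // lt; [case: (F_lt _ _ lt) | case: (F_lt _ _ lt)].
  move=> lt_ab; rewrite /F.
  have -> : s0 + INR b = s0 + INR a + INR (b - a) by rewrite minus_INR ?addnE; [ring | apply/leP/ltnW].
  apply: not_eq_sym; apply: trace_no_early_return; rewrite ?subn_gt0 //.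
  + have : INR a + 1 <= INR k by rewrite -S_INR; apply/le_INR/leP; exact: ltn_ord.
    by have := pos_INR a; lra.
  + by rewrite ltn_subLR ?(ltnW lt_ab) // (leq_trans (ltn_ord b)) ?leq_addl.
suff -> : ring_circles c x = F @: [set: 'I_k] by rewrite card_imset ?cardsT ?card_ord.
apply/setP => j; rewrite inE; apply/asboolP/imsetP => [[s [s_ge0 [<- [m s_def]]]]|[m _ ->]].
- have [M M_def] : exists M : nat, INR M = s - s0.
    have mz_ge0 : (0 <= m - z)%Z.
      have : (-1 < m - z)%Z by apply: lt_IZR; rewrite minus_IZR; lra.
      lia.
    by exists (Z.to_nat (m - z)); rewrite INR_IZR_INZ Znat.Z2Nat.id // minus_IZR; lra.
  exists (Ordinal (ltn_pmod M k_gt0)) => //; rewrite /F /=.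
  have -> : s = INR (M %/ k) * INR k + (s0 + INR (M %% k)).
    have : INR M = INR (M %/ k) * INR k + INR (M %% k).
      by rewrite {1}(divn_eq M k) -mult_INR -plus_INR.
    lra.
  by rewrite trace_periodic //; have := pos_INR (M %% k); lra.
- exists (s0 + INR m); split; first by have := pos_INR m; lra.
  by split=> //; exists (z + Z.of_nat m)%Z; rewrite plus_IZR -INR_IZR_INZ; lra.
Qed.

End Ring.

End Trace.

End SynchronizedSystem.

Local Close Scope R_scope.

Theorem lemma10 (n : nat) (cx cy : 'I_n -> R) (r : R)
    (f : 'I_n -> R) (g : 'I_n -> bool)
    (leave : 'I_n -> option R) (pos : 'I_n -> R -> 'I_n)
    (i0 : 'I_n) (tau0 : R) (c : R -> 'I_n) (k : nat) (t : R) :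
  (0 < r)%R ->
  disjoint_circles cx cy ->
  sync_schedule cx cy r f g ->
  scs_run cx cy r f g leave pos ->
  trace_path cx cy r f g i0 tau0 c ->
  ring_length_is cx cy f g tau0 c k ->
  (0 <= t)%R ->
  (#|[set q : 'I_n | `[< robot_in_ring cx cy f g leave pos tau0 c q t >]]| <= k)%N /\
  ((forall q : 'I_n, leave q = None) ->
     #|[set q : 'I_n | `[< robot_in_ring cx cy f g leave pos tau0 c q t >]]| = k).
Proof.
move=> _ disjoint sync run trace ring t_ge0.
set A := [set q | _].
have inA q : q \in A <-> present leave q t /\ pos q t \in ring_circles c (t - tau0).
  by rewrite inE; split=> [/asboolP/(robot_in_ringE disjoint)|/(robot_in_ringE disjoint)/asboolP].
have pos_inj q q' : present leave q t -> present leave q' t -> pos q t = pos q' t -> q = q'.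
  move=> pq pq' same; apply: NNPP => qq'.
  exact: (run_pos_inj disjoint sync run qq' t_ge0 pq pq' same).
have card_ring := card_ring_circles disjoint sync trace ring (t - tau0).
split.
- have pos_injA : {in A &, injective (pos ^~ t)}.
    by move=> q q' /inA [pq _] /inA [pq' _]; apply: pos_inj.
  rewrite -card_ring -(card_in_imset pos_injA); apply: subset_leq_card.
  by apply/subsetP => _ /imsetP [q /inA [_ in_ring] ->].
- move=> never_leave.
  have present_all q : present leave q t by rewrite /present never_leave.
  have -> : A = pos ^~ t @^-1: ring_circles c (t - tau0).
    by apply/setP => q; rewrite [in RHS]inE; apply/idP/idP => [/inA []|in_ring] //; apply/inA.
  by rewrite card_preimset // => q q'; apply: pos_inj.
Qed.
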